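(* Let $\mathcal{C}_0\subseteq\mathbb{F}_2^n$ be a code with $|\mathcal{C}_0|\ge 2$ and minimum distance $d$, let $t=\lfloor (d-1)/2\rfloor$, and let $\varepsilon>0$. Let $\rho$ be a pmf on $\mathbb{F}_2^n$ such that $d_{TV}(P_{\mathcal{C}_0}\ast\rho,P_{U_n})\le\varepsilon$. Then $$\sum_{x:|x|\le t}\rho(x)\le\frac{|\mathcal{C}_0|V_n(t)}{2^n}+\varepsilon\qquad\text{and}\qquad\sum_{x:|x|\ge n-t}\rho(x)\le\frac{|\mathcal{C}_0|V_n(t)}{2^n}+\varepsilon.$$
   Context: $|x|$ is the Hamming weight of $x\in\mathbb{F}_2^n$. $P_{\mathcal{C}_0}$ is the uniform pmf on $\mathcal{C}_0$, $P_{U_n}$ the uniform pmf on $\mathbb{F}_2^n$. Convolution: $(f\ast g)(x)=\sum_{y\in\mathbb{F}_2^n}f(y)g(x-y)$. $V_n(t)=\sum_{j=0}^t\binom nj$ is the size of a Hamming ball of radius $t$. The total variation distance is $d_{TV}(P,Q)=\max_{A}|P(A)-Q(A)|=\frac12\sum_x|P(x)-Q(x)|$. *)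

From mathcomp Require Import all_boot all_order all_algebra.
Set Implicit Arguments. Unset Strict Implicit. Unset Printing Implicit Defensive.
Import Order.TTheory GRing.Theory Num.Theory.
Local Open Scope ring_scope.

Definition hw (n : nat) (x : 'rV['F_2]_n) : nat := #|[set i : 'I_n | x 0 i != 0]|.

Definition hdist (n : nat) (x y : 'rV['F_2]_n) : nat := hw (x - y).

Definition min_distance (n : nat) (C : {set 'rV['F_2]_n}) (d : nat) : Prop :=
  (exists x y, [/\ x \in C, y \in C, x != y & hdist x y = d]) /\
  (forall x y, x \in C -> y \in C -> x != y -> (d <= hdist x y)%N).

Definition is_pmf (R : numDomainType) (n : nat) (p : 'rV['F_2]_n -> R) : Prop :=
  (forall x, 0 <= p x) /\ \sum_x p x = 1.

Definition unif_on (R : numFieldType) (n : nat) (C : {set 'rV['F_2]_n})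
  (x : 'rV['F_2]_n) : R := if x \in C then (#|C|%:R)^-1 else 0.

Definition unif (R : numFieldType) (n : nat) (x : 'rV['F_2]_n) : R :=
  (2 ^ n)%:R^-1.

Definition conv (R : numDomainType) (n : nat) (f g : 'rV['F_2]_n -> R)
  (x : 'rV['F_2]_n) : R := \sum_y f y * g (x - y).

Definition dTV (R : numFieldType) (n : nat) (P Q : 'rV['F_2]_n -> R) : R :=
  2^-1 * \sum_x `|P x - Q x|.

Definition Vball (n t : nat) : nat := \sum_(0 <= j < t.+1) 'C(n, j).

From mathcomp Require Import all_boot all_order all_algebra.
From mathcomp Require Import lra zify.
Set Implicit Arguments. Unset Strict Implicit. Unset Printing Implicit Defensive.
Import Order.TTheory GRing.Theory Num.Theory.
Local Open Scope ring_scope.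

(* For every set A, d_TV(P_C0 * rho, U) >= (P_C0 * rho)(A) - U(A).  Take
   A = C0 + S: every translate y + S with y in C0 lies in A, so
   (P_C0 * rho)(A) >= rho(S), while U(A) <= |C0| |S| / 2^n.  With S the
   Hamming ball of radius t around 0, or around the all-ones vector (the
   vectors of weight >= n - t), |S| <= V_n(t). *)

Section FiniteSums.
Variables (R : realFieldType) (T : finType).

Lemma sum_in_le_half_sum_norm (F : T -> R) (A : {pred T}) :
  \sum_x F x = 0 -> \sum_(x in A) F x <= 2^-1 * \sum_x `|F x|.
Proof.
move=> F0; rewrite (bigID [in A]) /= in F0.
rewrite (bigID [in A] _ (fun x => `|F x|)) /=.
have inA : \sum_(x in A) F x <= \sum_(x in A) `|F x|.
  by apply: ler_sum => x _; apply: ler_norm.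
have notinA : - \sum_(x | x \notin A) F x <= \sum_(x | x \notin A) `|F x|.
  by rewrite -sumrN; apply: ler_sum => x _; rewrite -normrN ler_norm.
lra.
Qed.

Lemma ler_sum_subset (F : T -> R) (A B : {set T}) :
  (forall x, 0 <= F x) -> B \subset A ->
  \sum_(x in B) F x <= \sum_(x in A) F x.
Proof.
move=> F_ge0 sBA; rewrite [leRHS](big_setID B) /= (setIidPr sBA) lerDl.
exact: sumr_ge0.
Qed.

End FiniteSums.

Section Distributions.
Variables (R : realFieldType) (n : nat).
Local Notation V := 'rV['F_2]_n.

Lemma dTV_ge_sub (P Q : V -> R) (A : {pred V}) :
  \sum_x P x = \sum_x Q x ->
  \sum_(x in A) P x - \sum_(x in A) Q x <= dTV P Q.
Proof.
move=> PQ; rewrite -sumrB; apply: sum_in_le_half_sum_norm.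
by rewrite sumrB PQ subrr.
Qed.

Lemma card_rV_F2 : #|{: V}| = (2 ^ n)%N.
Proof. by rewrite card_mx (card_Fp (erefl : prime 2)) mul1n. Qed.

Lemma sum_unif : \sum_x unif R (n:=n) x = 1.
Proof.
rewrite /unif sumr_const card_rV_F2 -[_ *+ _]mulr_natr mulVf //.
by rewrite pnatr_eq0 expn_eq0.
Qed.

Lemma sum_unif_on (C : {set V}) : C != set0 -> \sum_x unif_on R C x = 1.
Proof.
move=> C_neq0; rewrite /unif_on -big_mkcond /= sumr_const -[_ *+ _]mulr_natr mulVf //.
by rewrite pnatr_eq0 cards_eq0.
Qed.

Lemma sum_translate (g : V -> R) (y : V) : \sum_x g (x - y) = \sum_x g x.
Proof.
rewrite (reindex (+%R^~ y)) /=; first by apply: eq_bigr => x _; rewrite addrK.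
by exists (fun x => x - y) => x _; rewrite ?addrK ?subrK.
Qed.

Lemma sum_conv (f g : V -> R) :
  \sum_x conv f g x = (\sum_x f x) * \sum_x g x.
Proof.
rewrite /conv exchange_big mulr_suml; apply: eq_bigr => y _.
by rewrite -mulr_sumr sum_translate.
Qed.

Definition sumset (C S : {set V}) : {set V} := [set p.1 + p.2 | p in setX C S].

Lemma translate_subset_sumset (C S : {set V}) (y : V) :
  y \in C -> [set y + s | s in S] \subset sumset C S.
Proof.
move=> yC; apply/subsetP => _ /imsetP [s sS ->].
by apply/imsetP; exists (y, s) => //; rewrite inE yC sS.
Qed.

Lemma sum_le_sum_conv_sumset (C S : {set V}) (rho : V -> R) :
  C != set0 -> (forall x, 0 <= rho x) ->
  \sum_(x in S) rho x <= \sum_(x in sumset C S) conv (unif_on R C) rho x.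
Proof.
move=> C_neq0 rho_ge0; rewrite /conv exchange_big /=.
rewrite -[leLHS]mul1r -(sum_unif_on C_neq0) mulr_suml.
apply: ler_sum => y _; rewrite -mulr_sumr /unif_on.
case: ifP => yC; last by rewrite !mul0r.
rewrite ler_wpM2l ?invr_ge0 ?ler0n //.
have -> : \sum_(x in S) rho x = \sum_(x in [set y + s | s in S]) rho (x - y).
  rewrite big_imset /=; last by move=> a b _ _; apply: addrI.
  by apply: eq_bigr => s _; rewrite addrC addKr.
exact: ler_sum_subset (translate_subset_sumset _ yC).
Qed.

Lemma sum_unif_sumset (C S : {set V}) :
  \sum_(x in sumset C S) unif R (n:=n) x <= (#|C| * #|S|)%:R / (2 ^ n)%:R.
Proof.
rewrite /unif sumr_const -[_ *+ _]mulr_natr mulrC ler_wpM2r ?invr_ge0 ?ler0n //.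
by rewrite ler_nat -cardsX leq_imset_card.
Qed.

Lemma sum_le_card_add_dTV (C S : {set V}) (rho : V -> R) :
  C != set0 -> is_pmf rho ->
  \sum_(x in S) rho x <=
    (#|C| * #|S|)%:R / (2 ^ n)%:R + dTV (conv (unif_on R C) rho) (unif R (n:=n)).
Proof.
move=> C_neq0 [rho_ge0 rho1].
have mass : \sum_x conv (unif_on R C) rho x = \sum_x unif R (n:=n) x.
  by rewrite sum_conv sum_unif_on // rho1 sum_unif mulr1.
have := dTV_ge_sub (mem (sumset C S)) mass.
have := sum_le_sum_conv_sumset S C_neq0 rho_ge0.
have := sum_unif_sumset C S.
lra.
Qed.

End Distributions.

Section HammingBalls.
Variable n : nat.
Local Notation V := 'rV['F_2]_n.

Definition supp (x : V) : {set 'I_n} := [set i | x 0 i != 0].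

Lemma eq_F2_of_neq0 (a b : 'F_2) : (a != 0) = (b != 0) -> a = b.
Proof.
by case: a => [[|[|?]] ?]; case: b => [[|[|?]] ?] //= _; apply/val_inj.
Qed.

Lemma supp_inj : injective supp.
Proof.
move=> x y /setP xy; apply/rowP => j.
by apply: eq_F2_of_neq0; have := xy j; rewrite !inE.
Qed.

Local Open Scope nat_scope.

Lemma card_sets_card_le (T : finType) (t : nat) :
  #|[set A : {set T} | #|A| <= t]| <= Vball #|T| t.
Proof.
elim: t => [|t IH].
  rewrite /Vball big_nat1 -card_draws; apply: subset_leq_card.
  by apply/subsetP => A; rewrite !inE leqn0.
have -> : [set A : {set T} | #|A| <= t.+1] =
    [set A : {set T} | #|A| <= t] :|: [set A : {set T} | #|A| == t.+1].
  by apply/setP => A; rewrite !inE leq_eqVlt orbC ltnS.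
rewrite /Vball big_nat_recr //= cardsU card_draws.
by apply: leq_trans (leq_subr _ _) _; rewrite leq_add2r.
Qed.

Lemma card_hw_le (t : nat) : #|[set x : V | hw x <= t]| <= Vball n t.
Proof.
rewrite -[n in Vball n]card_ord; apply: leq_trans (card_sets_card_le _ t).
rewrite -(card_imset _ supp_inj); apply: subset_leq_card.
by apply/subsetP => A /imsetP [x]; rewrite !inE => hx ->.
Qed.

Lemma card_hw_ge (t : nat) : #|[set x : V | n - t <= hw x]| <= Vball n t.
Proof.
rewrite -[n in Vball n]card_ord; apply: leq_trans (card_sets_card_le _ t).
have suppC_inj : injective (fun x : V => ~: supp x).
  by move=> x y /setC_inj /supp_inj.
rewrite -(card_imset _ suppC_inj); apply: subset_leq_card.
apply/subsetP => A /imsetP [x]; rewrite !inE => hx ->.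
have := cardsC (supp x); rewrite card_ord -/(hw x).
move: hx; set w := hw x; set c := #|~: _|; lia.
Qed.

End HammingBalls.

Lemma sum_le_card_bound_add_eps (R : realFieldType) n (C S : {set 'rV['F_2]_n})
    (rho : 'rV['F_2]_n -> R) (eps : R) (v : nat) :
  C != set0 -> is_pmf rho ->
  dTV (conv (unif_on R C) rho) (unif R (n:=n)) <= eps -> (#|S| <= v)%N ->
  \sum_(x in S) rho x <= (#|C| * v)%:R / (2 ^ n)%:R + eps.
Proof.
move=> C_neq0 rho_pmf tv Sv.
apply: le_trans (sum_le_card_add_dTV S C_neq0 rho_pmf) _.
apply: lerD => //; rewrite ler_wpM2r ?invr_ge0 ?ler0n // ler_nat.
by rewrite leq_mul2l Sv orbT.
Qed.

Theorem mainTheorem2 (R : realFieldType) (n : nat) (C0 : {set 'rV['F_2]_n})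
  (d : nat) (eps : R) (rho : 'rV['F_2]_n -> R) :
  (2 <= #|C0|)%N ->
  min_distance C0 d ->
  0 < eps ->
  is_pmf rho ->
  dTV (conv (unif_on R C0) rho) (unif R (n:=n)) <= eps ->
  let t := ((d - 1) %/ 2)%N in
  (\sum_(x | (hw x <= t)%N) rho x
     <= (#|C0| * Vball n t)%:R / (2 ^ n)%:R + eps) /\
  (\sum_(x | (n - t <= hw x)%N) rho x
     <= (#|C0| * Vball n t)%:R / (2 ^ n)%:R + eps).
Proof.
move=> C0_ge2 _ _ rho_pmf tv t.
have C0_neq0 : C0 != set0 by rewrite -card_gt0 (leq_trans _ C0_ge2).
split.
- have := sum_le_card_bound_add_eps C0_neq0 rho_pmf tv (card_hw_le n t).
  by under eq_bigl do rewrite inE.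
- have := sum_le_card_bound_add_eps C0_neq0 rho_pmf tv (card_hw_ge n t).
  by under eq_bigl do rewrite inE.
Qed.
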